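(* Let $D$ be a strong digraph with $D\in\mathcal{LE}_2$. Then $\chi(D)\leq 3$.
   Context: All digraphs are finite, without loops or multiple arcs. Paths and cycles are directed; the length of a path or cycle is its number of arcs. The chromatic number $\chi(D)$ is the least $k$ such that the vertices of $D$ can be coloured with $k$ colours so that any two vertices joined by an arc (in either direction) get different colours. A digraph is strong if for every ordered pair of vertices $x,y$ there is a directed path from $x$ to $y$. For a subdigraph $H$ of a digraph $D$, an ear of $H$ in $D$ is either a directed path in $D$ whose two end vertices lie in $H$ and whose internal vertices do not lie in $H$, or a directed cycle in $D$ having exactly one vertex in $H$. An ear decomposition of a strong digraph $D$ is a sequence $(D_0,D_1,\ldots,D_k)$ of strong subdigraphs of $D$ such that $D_0$ is a directed cycle, $D_{j+1}=D_j\cup P_j$ where $P_j$ is an ear of $D_j$ in $D$ for every $j\in\{0,\ldots,k-1\}$, and $D_k=D$. For an integer $i\geq 1$, $\mathcal{LE}_i$ denotes the family of strong digraphs having an ear decomposition in which every ear has length at least $i$. *)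

From mathcomp Require Import all_boot.
Set Implicit Arguments. Unset Strict Implicit. Unset Printing Implicit Defensive.

Section Digraphs.
Variable T : finType.
(* Multiple arcs cannot occur;
   looplessness is the hypothesis [irreflexive E] in the theorem. *)
Variable E : rel T.

Definition strong := forall x y : T, connect E x y.

Definition colorableb (k : nat) : bool :=
  [exists c : {ffun T -> 'I_k}, [forall u, forall v, E u v ==> (c u != c v)]].

(* Chromatic number: the least k such that D is k-colourable.  For a loopless
   digraph, D is #|T|-colourable, so the least such k lies in 0..#|T| and is
   found by this search. *)
Definition chi : nat := find colorableb (iota 0 #|T|.+1).

Lemma colorable_card : irreflexive E -> colorableb #|T|.
Proof.
move=> irrE; apply/existsP; exists [ffun x => enum_rank x].
apply/forallP => u; apply/forallP => v; apply/implyP => Euv.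
rewrite !ffunE; apply/negP => /eqP /enum_rank_inj Huv.
by move: Euv; rewrite Huv irrE.
Qed.

Lemma chiP : irreflexive E ->
  colorableb chi /\ forall k, colorableb k -> chi <= k.
Proof.
move=> irrE; have hc := colorable_card irrE.
have hhas : has colorableb (iota 0 #|T|.+1).
  apply/hasP; exists #|T| => //; by rewrite mem_iota add0n ltnSn.
have hlt := hhas; rewrite has_find size_iota in hlt.
split.
  by have := nth_find 0 hhas; rewrite nth_iota.
move=> k hk; rewrite leqNgt; apply/negP => hkc.
have := before_find 0 hkc; rewrite nth_iota ?add0n ?hk //.
exact: ltn_trans hkc hlt.
Qed.

(* x :: q is a directed path (distinct vertices, consecutive ones joined by
   arcs); its length is size q and its arcs are zip (x :: q) q. *)
Definition is_dpath (x : T) (q : seq T) : bool := path E x q && uniq (x :: q).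
Definition path_arcs (x : T) (q : seq T) : seq (T * T) := zip (x :: q) q.

(* x :: q is a directed cycle x -> q_1 -> ... -> q_m -> x with distinct
   vertices, m >= 1; its length is size q + 1, its arcs zip (x::q) (rcons q x). *)
Definition is_dcycle (x : T) (q : seq T) : bool :=
  (0 < size q) && path E x (rcons q x) && uniq (x :: q).
Definition cycle_arcs (x : T) (q : seq T) : seq (T * T) := zip (x :: q) (rcons q x).

Definition strong_sub (V : {set T}) (A : {set T * T}) : Prop :=
  forall x y, x \in V -> y \in V -> connect (fun u v => (u, v) \in A) x y.

Definition path_ear (V : {set T}) (x : T) (q : seq T) : bool :=
  [&& is_dpath x q, 0 < size q, x \in V, last x q \in V &
      all (fun v => v \notin V) (behead (belast x q))].

Definition cycle_ear (V : {set T}) (x : T) (q : seq T) : bool :=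
  [&& is_dcycle x q, x \in V & all (fun v => v \notin V) q].

(* LEdec i V A : (V, A) is the last term D_j of a sequence (D_0, ..., D_j) of
   strong subdigraphs of D where D_0 is a directed cycle of D and each
   D_{l+1} = D_l \cup P_l for an ear P_l of D_l in D of length at least i. *)
Inductive LEdec (i : nat) : {set T} -> {set T * T} -> Prop :=
  | LE_base x q :
      is_dcycle x q ->
      strong_sub [set v in x :: q] [set a in cycle_arcs x q] ->
      LEdec i [set v in x :: q] [set a in cycle_arcs x q]
  | LE_path V A x q :
      LEdec i V A -> path_ear V x q -> i <= size q ->
      strong_sub (V :|: [set v in x :: q]) (A :|: [set a in path_arcs x q]) ->
      LEdec i (V :|: [set v in x :: q]) (A :|: [set a in path_arcs x q])
  | LE_cycle V A x q :
      LEdec i V A -> cycle_ear V x q -> i <= (size q).+1 ->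
      strong_sub (V :|: [set v in x :: q]) (A :|: [set a in cycle_arcs x q]) ->
      LEdec i (V :|: [set v in x :: q]) (A :|: [set a in cycle_arcs x q]).

Definition in_LE (i : nat) : Prop :=
  LEdec i [set: T] [set a : T * T | E a.1 a.2].

End Digraphs.

From mathcomp Require Import all_boot.
Set Implicit Arguments.
Unset Strict Implicit.
Unset Printing Implicit Defensive.

(* Colour D along its ear decomposition.  Every ear of length at least 2 (and
   the initial cycle) has an internal vertex, and its internal vertices are new.
   Recolouring them greedily in order along the ear, each one avoids the colour
   of its predecessor, and the last one also avoids the colour of the final
   endpoint; two forbidden colours leave a third.  Old vertices keep their
   colours, so the colouring stays proper. *)

Lemma mem_zip (S U : eqType) (s : seq S) (t : seq U) a :
  a \in zip s t -> (a.1 \in s) && (a.2 \in t).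
Proof.
elim: s t => [|x s IH] [|y t] //=; rewrite in_cons => /predU1P [-> | /IH].
  by rewrite /= !in_cons !eqxx.
by case/andP => s1 t2; rewrite !in_cons s1 t2 !orbT.
Qed.

Lemma path_zipE (S : Type) (e : rel S) x s :
  path e x s = all (fun a => e a.1 a.2) (zip (x :: s) s).
Proof. by elim: s x => //= y s IH x; rewrite IH. Qed.

Section Ears.
Variable T : finType.

Lemma cycle_arcsE (x : T) q : cycle_arcs x q = path_arcs x (rcons q x).
Proof.
by rewrite /cycle_arcs /path_arcs; elim: q {1 3}x => //= v q IH w; rewrite IH.
Qed.

Lemma path_arcs_sub x (l : seq T) :
  [set a in path_arcs x l] \subset setX [set v in x :: l] [set v in x :: l].
Proof.
apply/subsetP => -[u v]; rewrite inE => /mem_zip /andP [/= ul lv].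
by rewrite in_setX !in_set ul in_cons lv orbT.
Qed.

Lemma cycle_arcs_sub x (q : seq T) :
  [set a in cycle_arcs x q] \subset setX [set v in x :: q] [set v in x :: q].
Proof.
rewrite cycle_arcsE; apply: subset_trans (path_arcs_sub _ _) _.
by apply: setXS; apply/subsetP => v; rewrite !inE mem_rcons in_cons orbA orbb.
Qed.

Lemma LEdec_sub (E : rel T) i V A : LEdec E i V A -> A \subset setX V V.
Proof.
have earS (V0 W : {set T}) (A0 B : {set T * T}) : A0 \subset setX V0 V0 ->
    B \subset setX W W -> A0 :|: B \subset setX (V0 :|: W) (V0 :|: W).
  move=> subA subB; rewrite subUset.
  by rewrite (subset_trans subA) ?(subset_trans subB) ?setXS ?subsetUl ?subsetUr.
elim=> [x q _ _ | {}V {}A x q _ subA _ _ _ | {}V {}A x q _ subA _ _ _].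
- exact: cycle_arcs_sub.
- exact: earS subA (path_arcs_sub _ _).
- exact: earS subA (cycle_arcs_sub _ _).
Qed.

Variable K : finType.
Hypothesis card_K : 2 < #|K|.

Definition proper_coloring (c : T -> K) (A : {set T * T}) :=
  forall a, a \in A -> c a.1 != c a.2.

Lemma exists_avoid2 (a b : K) : exists k, (k != a) && (k != b).
Proof.
have /subsetPn [k _] : ~~ ([set: K] \subset [set a; b]).
  apply: contraTN card_K => /subset_leq_card; rewrite cardsT cards2 -leqNgt.
  by move/leq_trans; apply; case: (a != b).
by rewrite !inE negb_or; exists k.
Qed.

Lemma recolor_path (c : T -> K) x y s :
  uniq s -> x \notin s -> y \notin s -> 0 < size s ->
  exists c' : T -> K, (forall v, v \notin s -> c' v = c v) /\
    path (fun u w => c' u != c' w) x (rcons s y).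
Proof.
elim: s x c => [|v s IH] x c //= /andP [vs us].
rewrite !in_cons !negb_or => /andP [xv xs] /andP [yv ys] _.
case: s IH vs us xs ys => [|w s] IH vs us xs ys.
  have [k /andP [kx ky]] := exists_avoid2 (c x) (c y).
  exists [eta c with v |-> k]; split => [u|] /=.
    by rewrite mem_seq1 => /negbTE ->.
  by rewrite eqxx (negbTE xv) (negbTE yv) eq_sym kx ky.
have [k /andP [kx _]] := exists_avoid2 (c x) (c x).
have [c' [off_s path_c']] := IH v [eta c with v |-> k] us vs ys isT.
exists c'; split.
  by move=> u; rewrite in_cons negb_or => /andP [uv /off_s ->] /=; rewrite (negbTE uv).
rewrite rcons_cons; apply/andP; split; last exact: path_c'.
by rewrite !off_s //= eqxx (negbTE xv) eq_sym kx.
Qed.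

Lemma proper_add_ear (c : T -> K) (V : {set T}) (A : {set T * T}) x s y :
  A \subset setX V V -> proper_coloring c A ->
  uniq s -> x \notin s -> y \notin s -> 0 < size s ->
  all (fun v => v \notin V) s ->
  exists c' : T -> K, proper_coloring c' (A :|: [set a in path_arcs x (rcons s y)]).
Proof.
move=> subA pc us xs ys s0 sV.
have [c' [off_s path_c']] := recolor_path c us xs ys s0.
have offV v : v \in V -> c' v = c v by move=> vV; exact/off_s/(contraL (allP sV v)).
exists c' => a; rewrite in_setU inE => /orP [aA | a_ear].
  case: a aA => u v aA; have /[!in_setX] /andP [uV vV] := subsetP subA _ aA.
  by rewrite /= !offV //; apply: pc aA.
by move: path_c'; rewrite path_zipE => /allP; apply.
Qed.

Lemma LEdec_colorable (E : rel T) i V A :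
  1 < i -> LEdec E i V A -> exists c : T -> K, proper_coloring c A.
Proof.
move=> i_gt1; elim=> [x q | {}V {}A x q dec [c pc] ear iq _
                       | {}V {}A x q dec [c pc] ear _ _].
- case/andP => /andP [q0 _] /= /andP [xq uq] _.
  have /card_gt0P [k0 _] : 0 < #|K| := ltn_trans (isT : 0 < 2) card_K.
  have pc0 : proper_coloring (fun=> k0) set0 by move=> a; rewrite inE.
  have q_new : all (fun v => v \notin set0) q by apply/allP => v _; rewrite inE.
  have [c pc] := proper_add_ear (sub0set _) pc0 uq xq xq q0 q_new.
  by exists c; rewrite cycle_arcsE -[[set a in _]]set0U.
- case/lastP: q ear iq => [|s y]; first by move=> _; rewrite leqNgt (ltnW i_gt1).
  rewrite /path_ear /is_dpath last_rcons belast_rcons size_rcons /= mem_rcons rcons_uniq.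
  rewrite in_cons negb_or => /and4P [/and4P [_ /andP [_ xs] ys us] _ _ sV] iq.
  exact: proper_add_ear (LEdec_sub dec) pc us xs ys (leq_trans i_gt1 iq) sV.
- case/and3P: ear => /andP [/andP [q0 _]]; rewrite cons_uniq => /andP [xq uq] _ qV.
  by rewrite cycle_arcsE; apply: (proper_add_ear (LEdec_sub dec) pc uq xq xq q0 qV).
Qed.

End Ears.

Theorem mainTheorem14 (T : finType) (E : rel T) :
  irreflexive E -> strong E -> in_LE E 2 -> chi E <= 3.
Proof.
move=> irrE _ LE2.
have card_I3 : 2 < #|'I_3| by rewrite card_ord.
have [c pc] := LEdec_colorable card_I3 (isT : 1 < 2) LE2.
have [_ chi_min] := chiP irrE; apply: chi_min.
apply/existsP; exists [ffun v => c v].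
apply/forallP => u; apply/forallP => v; apply/implyP => Euv.
by rewrite !ffunE; apply: (pc (u, v)); rewrite inE.
Qed.
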